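(* Let $O\rhd c_1$ and $O\rhd c_2$ be abstract P-markings. Then $O\rhd c_1\sim_C O\rhd c_2$ if and only if $O\rhd c_1\sim_{AC}O\rhd c_2$.
   Context: Fix a set $Act$ of action labels, an infinite set $\mathcal{E}$ of event names and a net $N=(S,T,F,l)$ (disjoint places $S$ and transitions $T$, $F\subseteq(S\times T)\cup(T\times S)$, $l\colon T\to Act$, ${}^\bullet t=\{s:(s,t)\in F\}$, $t^\bullet=\{s:(t,s)\in F\}$ nonempty). Posets are finite $Act$-labelled posets $O=(X_O,\preccurlyeq_O,l_O)$, $X_O\subseteq\mathcal{E}$; $|O|=\{(x,l_O(x))\}$, $x_a=(x,a)$. Morphisms preserve order and labels; isomorphisms are bijective morphisms with morphism inverses. $\max_O K$: maximal elements; $K$ down-closed if $y\in K$, $x\preccurlyeq_O y\Rightarrow x\in K$. Causal markings: finite sets $c$ of pairs $K\vdash s$ ($s\in S$, $K$ finite $\subseteq\mathcal{E}\times Act$); $\mathcal{K}(c)$ union of cause sets, $|c|$ set of places, $K\vdash m=\{K\vdash s:s\in m\}$, $c\sigma=\{\sigma(K)\vdash s\}$. P-marking $O\rhd c$: cause sets are down-closed subsets of $|O|$. $\delta(O,K,e_a)$: $O$ plus event $e\notin X_O$ labelled $a$ above all of $K$, reflexive-transitively closed. CG$_C$: $O\rhd c\cup c'\xrightarrow{K\vdash e_a}\delta(O,K,e_a)\rhd(\mathcal{K}(c)\cup\{e_a\}\vdash t^\bullet)\cup c'$ whenever $t\in T$, $O\rhd c\cup c'$ a P-marking, $|c|={}^\bullet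 t$, $a=l(t)$, $e\in\mathcal{E}\setminus X_O$, $K=\max_O\mathcal{K}(c)$. Concrete causal bisimulation: family $\{R_O\}$ indexed by posets with: $(O_1\rhd c_1,O_2\rhd c_2)\in R_O\Rightarrow O_1=O_2=O$; if $(O\rhd c_1,O\rhd c_2)\in R_O$ and $O\rhd c_1\xrightarrow{K\vdash e_a}O'\rhd c_1'$ then $O\rhd c_2\xrightarrow{K\vdash e_a}O'\rhd c_2'$ with $(O'\rhd c_1',O'\rhd c_2')\in R_{O'}$, and vice versa; $\sim_C$ greatest. Fix canonical representatives $[O]_\cong$ of isomorphism classes and isomorphisms $\alpha_O\colon O\to[O]_\cong$; $O$ is abstract if $[O]_\cong=O$, and an abstract P-marking has an abstract poset. For abstract $O$: $\delta(O,K,a)=[\delta(O,K,e_a)]_\cong$, $new(O,K,a)$ its added event, $old(O,K,a)\colon O\to\delta(O,K,a)$ the embedding corresponding to the inclusion. CG$_{AC}$: for each CG$_C$ transition $O\rhd c\xrightarrow{K\vdash e_a}\delta(O,K,e_a)\rhd c'$, a transition $[O]_\cong\rhd c\alpha_O\stackrel{\alpha_O(K)\vdash a}{\Longrightarrow}\delta([O]_\cong,\alpha_O(K),a)\rhd c''$, $c''$ being $c'$ renamed by $x\mapsto old([O]_\cong,\alpha_O(K),a)(\alpha_O(x))$ ($x\in X_O$), $e_a\mapsto new([O]_\cong,\alpha_O(K),a)$. Abstract causal bisimulation: family $\{R_O\}$ indexed by abstract posets of relations on abstract P-markings with: $(O_1\rhd c_1,O_2\rhd c_2)\in R_O\Rightarrow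 O_1=O_2=O$; if $(O\rhd c_1,O\rhd c_2)\in R_O$ and $O\rhd c_1\stackrel{K\vdash a}{\Longrightarrow}O'\rhd c_1'$ then $O\rhd c_2\stackrel{K\vdash a}{\Longrightarrow}O'\rhd c_2'$ with $(O'\rhd c_1',O'\rhd c_2')\in R_{O'}$, and vice versa; $\sim_{AC}$ greatest. *)

From Stdlib Require Import List Relations ClassicalEpsilon.
Set Implicit Arguments.

Section CausalNets.

(* Event names E, action labels Act, places S, transitions T. *)
Variables (E Act S T : Type).

(* plab x = Some a  iff  x \in X_O and l_O(x) = a ;  ple is the order. *)
Record poset := Poset { plab : E -> option Act ; ple : E -> E -> Prop }.

Definition inX (O : poset) (x : E) : Prop := plab O x <> None.

Definition finite_pred {A : Type} (P : A -> Prop) : Prop :=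
  exists L : list A, forall x, P x -> In x L.

Definition is_poset (O : poset) : Prop :=
  finite_pred (inX O) /\
  (forall x y, ple O x y -> inX O x /\ inX O y) /\
  (forall x, inX O x -> ple O x x) /\
  (forall x y, ple O x y -> ple O y x -> x = y) /\
  (forall x y z, ple O x y -> ple O y z -> ple O x z).

Definition cset := E * Act -> Prop.
Definition carrier (O : poset) : cset := fun p => plab O (fst p) = Some (snd p).

(* Morphisms / isomorphisms of posets (functions E -> E, meaningful on X_O) *)
Definition morphism (O O' : poset) (f : E -> E) : Prop :=
  (forall x, inX O x -> plab O' (f x) = plab O x) /\
  (forall x y, ple O x y -> ple O' (f x) (f y)).

Definition iso (O O' : poset) (f : E -> E) : Prop :=
  morphism O O' f /\
  exists g : E -> E, morphism O' O g /\
    (forall x, inX O x -> g (f x) = x) /\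
    (forall y, inX O' y -> f (g y) = y).

Definition isomorphic (O O' : poset) : Prop := exists f, iso O O' f.

Definition maxO (O : poset) (K : cset) : cset :=
  fun p => K p /\ forall q, K q -> ple O (fst p) (fst q) -> fst q = fst p.

Definition down_closed (O : poset) (K : cset) : Prop :=
  forall y b x a, K (y, b) -> ple O x y -> plab O x = Some a -> K (x, a).

(* Causal markings: sets of pairs K |- s *)
Definition marking := cset -> S -> Prop.

Definition causes (c : marking) : cset := fun p => exists K s, c K s /\ K p.
Definition places (c : marking) : S -> Prop := fun s => exists K, c K s.
Definition mcup (c c' : marking) : marking := fun K s => c K s \/ c' K s.

Definition img (f : E -> E) (K : cset) : cset :=
  fun p => exists x, K (x, snd p) /\ fst p = f x.
Definition mimg (f : E -> E) (c : marking) : marking :=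
  fun K' s => exists K, c K s /\ K' = img f K.

Definition pmarking (O : poset) (c : marking) : Prop :=
  is_poset O /\
  finite_pred (fun p : cset * S => c (fst p) (snd p)) /\
  (forall K s, c K s -> (forall p, K p -> carrier O p) /\ down_closed O K).

Definition upd (e : E) (a : Act) (O : poset) : E -> option Act :=
  fun x => if excluded_middle_informative (x = e) then Some a else plab O x.

Definition delta (O : poset) (K : cset) (e : E) (a : Act) : poset :=
  let lab' := upd e a O in
  let base := fun x y => ple O x y \/ (y = e /\ exists b, K (x, b)) in
  Poset lab' (fun x y => lab' x <> None /\ lab' y <> None /\
                         clos_refl_trans E base x y).

(* The net N = (S, T, F, l): pre s t <-> (s,t) in F, post t s <-> (t,s) in F *)
Variables (pre : S -> T -> Prop) (post : T -> S -> Prop) (lab : T -> Act).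

Definition cstep (O : poset) (c0 : marking) (K : cset) (e : E) (a : Act)
                 (O' : poset) (c0' : marking) : Prop :=
  exists (t : T) (c c' : marking),
    c0 = mcup c c' /\
    pmarking O c0 /\
    (forall s, places c s <-> pre s t) /\
    a = lab t /\
    ~ inX O e /\
    K = maxO O (causes c) /\
    O' = delta O K e a /\
    c0' = mcup (fun K' s => K' = (fun p => causes c p \/ p = (e, a)) /\ post t s) c'.

Definition cbisim (R : poset -> poset * marking -> poset * marking -> Prop) : Prop :=
  forall O O1 c1 O2 c2, R O (O1, c1) (O2, c2) ->
    O1 = O /\ O2 = O /\ pmarking O c1 /\ pmarking O c2 /\
    (forall K e a O' c1', cstep O c1 K e a O' c1' ->
       exists c2', cstep O c2 K e a O' c2' /\ R O' (O', c1') (O', c2')) /\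
    (forall K e a O' c2', cstep O c2 K e a O' c2' ->
       exists c1', cstep O c1 K e a O' c1' /\ R O' (O', c1') (O', c2')).

Definition csim (O : poset) (c1 c2 : marking) : Prop :=
  exists R, cbisim R /\ R O (O, c1) (O, c2).

(* Canonical representatives [O] (canon O), isomorphisms alpha_O : O -> [O],
   and the choice fr O K a of the fresh event used to define delta(O,K,a). *)
Variables (canon : poset -> poset) (alpha : poset -> E -> E)
          (fr : poset -> cset -> Act -> E).

Definition abstract (O : poset) : Prop := canon O = O.
Definition abs_pmarking (O : poset) (c : marking) : Prop :=
  pmarking O c /\ abstract O.

Definition dabs (O : poset) (K : cset) (a : Act) : poset :=
  canon (delta O K (fr O K a) a).
Definition newev (O : poset) (K : cset) (a : Act) : E :=
  alpha (delta O K (fr O K a) a) (fr O K a).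
Definition oldf (O : poset) (K : cset) (a : Act) : E -> E :=
  alpha (delta O K (fr O K a) a).

Definition astep (O0 : poset) (d : marking) (K0 : cset) (a : Act)
                 (O1 : poset) (d1 : marking) : Prop :=
  exists (O : poset) (c : marking) (K : cset) (e : E) (O' : poset) (c' : marking),
    cstep O c K e a O' c' /\
    O0 = canon O /\
    d = mimg (alpha O) c /\
    K0 = img (alpha O) K /\
    O1 = dabs O0 K0 a /\
    d1 = mimg (fun x => if excluded_middle_informative (x = e)
                        then newev O0 K0 a
                        else oldf O0 K0 a (alpha O x)) c'.

Definition abisim (R : poset -> poset * marking -> poset * marking -> Prop) : Prop :=
  forall O O1 c1 O2 c2, R O (O1, c1) (O2, c2) ->
    O1 = O /\ O2 = O /\ abs_pmarking O c1 /\ abs_pmarking O c2 /\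
    (forall K a O' c1', astep O c1 K a O' c1' ->
       exists c2', astep O c2 K a O' c2' /\ R O' (O', c1') (O', c2')) /\
    (forall K a O' c2', astep O c2 K a O' c2' ->
       exists c1', astep O c1 K a O' c1' /\ R O' (O', c1') (O', c2')).

Definition asim (O : poset) (c1 c2 : marking) : Prop :=
  exists R, abisim R /\ R O (O, c1) (O, c2).

End CausalNets.

From Stdlib Require Import List Relations ClassicalEpsilon FunctionalExtensionality PropExtensionality.

Set Implicit Arguments.

(* Renaming a P-marking along a poset isomorphism, sending the new event to any event
   fresh for the target, transports concrete steps, and hence concrete bisimilarity.
   An abstract step from an abstract poset O, whichever isomorphism its definition goes
   through, is the canonical image of the concrete step from O that uses the designated
   fresh event [fr O K a]. Hence concrete bisimilarity restricted to abstract posets and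
   pushed through the canonical isomorphisms is an abstract bisimulation; conversely,
   relating P-markings whose image under some isomorphism onto the canonical
   representative is abstractly bisimilar gives a concrete bisimulation. *)

Section Posets.
Variables (E Act S : Type).
Implicit Types (c : marking E Act S) (K : cset E Act) (O P Q : poset E Act) (f g : E -> E).

Lemma cset_ext (K1 K2 : cset E Act) : (forall p, K1 p <-> K2 p) -> K1 = K2.
Proof.
  intro H. apply functional_extensionality; intro p.
  apply propositional_extensionality; auto.
Qed.

Lemma marking_ext (c1 c2 : marking E Act S) : (forall K s, c1 K s <-> c2 K s) -> c1 = c2.
Proof.
  intro H. apply functional_extensionality; intro K. apply functional_extensionality; intro s.
  apply propositional_extensionality; auto.
Qed.

Definition cset_in O K : Prop := forall x b, K (x, b) -> inX O x.
Definition marking_in O c : Prop := forall K s, c K s -> cset_in O K.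

Lemma img_comp f g K : img g (img f K) = img (fun x => g (f x)) K.
Proof.
  apply cset_ext; intros [u b]; unfold img; simpl; split.
  - intros [y [[x [Hx ->]] ->]]; eauto.
  - intros [x [Hx ->]]; exists (f x); split; eauto.
Qed.

Lemma img_ext f g K : (forall x b, K (x, b) -> f x = g x) -> img f K = img g K.
Proof.
  intro H. apply cset_ext; intros [u b]; unfold img; simpl; split;
    intros [x [Hx ->]]; exists x; split; eauto; symmetry; eauto.
Qed.

Lemma img_id K : img (fun x => x) K = K.
Proof.
  apply cset_ext; intros [u b]; unfold img; simpl; split.
  - intros [x [Hx ->]]; auto.
  - intro H; exists u; auto.
Qed.

Lemma img_cancel {O f g K} : cset_in O K -> (forall x, inX O x -> g (f x) = x) ->
  img g (img f K) = K.
Proof.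
  intros HK Hgf. rewrite img_comp; rewrite <- (img_id K) at 2. apply img_ext; eauto.
Qed.

Lemma mimg_comp f g c : mimg g (mimg f c) = mimg (fun x => g (f x)) c.
Proof.
  apply marking_ext; intros K s; unfold mimg; split.
  - intros [K1 [[K0 [H0 ->]] ->]]. exists K0; split; auto. apply img_comp.
  - intros [K0 [H0 ->]]. exists (img f K0); split; eauto. symmetry; apply img_comp.
Qed.

Lemma mimg_ext f g c : (forall K s x b, c K s -> K (x, b) -> f x = g x) -> mimg f c = mimg g c.
Proof.
  intro H. apply marking_ext; intros K s; unfold mimg; split;
    intros [K0 [H0 ->]]; exists K0; split; auto; [|symmetry]; apply img_ext; eauto.
Qed.

Lemma mimg_id c : mimg (fun x => x) c = c.
Proof.
  apply marking_ext; intros K s; unfold mimg; split.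
  - intros [K0 [H0 ->]]. rewrite img_id; auto.
  - intro H. exists K. rewrite img_id; auto.
Qed.

Lemma mimg_cancel {O f g c} : marking_in O c -> (forall x, inX O x -> g (f x) = x) ->
  mimg g (mimg f c) = c.
Proof.
  intros Hc Hgf. rewrite mimg_comp; rewrite <- (mimg_id c) at 2.
  apply mimg_ext; intros; eapply Hgf, Hc; eauto.
Qed.

Lemma mimg_mcup f c c' : mimg f (mcup c c') = mcup (mimg f c) (mimg f c').
Proof.
  apply marking_ext; intros K s; unfold mimg, mcup; split.
  - intros [K0 [[H|H] ->]]; [left|right]; eauto.
  - intros [[K0 [H ->]]|[K0 [H ->]]]; eauto.
Qed.

Lemma places_mimg f c : places (mimg f c) = places c.
Proof.
  apply functional_extensionality; intro s. apply propositional_extensionality.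
  unfold places, mimg; split.
  - intros [K [K0 [H _]]]; eauto.
  - intros [K H]. exists (img f K), K; auto.
Qed.

Lemma causes_mimg f c : causes (mimg f c) = img f (causes c).
Proof.
  apply cset_ext; intros [u b]; unfold causes, mimg, img; simpl; split.
  - intros [K' [s [[K [H1 ->]] [x [H3 Hu]]]]]. simpl in *. subst. eauto 6.
  - intros [x [[K [s [H1 H2]]] Hu]]. simpl in *. subst.
    exists (img f K), s. split; [eauto | exists x; auto].
Qed.

Lemma marking_in_causes O c : marking_in O c -> cset_in O (causes c).
Proof. intros Hc x b [K [s [H1 H2]]]. eapply Hc; eauto. Qed.

Lemma ple_inX {O x y} : is_poset O -> ple O x y -> inX O x /\ inX O y.
Proof. intros [_ [H _]]. apply H. Qed.

Lemma morphism_inX {O P f x} : morphism O P f -> inX O x -> inX P (f x).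
Proof. intros [H1 _] Hx. unfold inX in *. rewrite H1; auto. Qed.

Lemma iso_inverse O P f : iso O P f -> exists g, iso P O g /\
  (forall x, inX O x -> g (f x) = x) /\ (forall y, inX P y -> f (g y) = y).
Proof.
  intros [Hf [g [Hg [H1 H2]]]]. exists g.
  split; [split; [auto | exists f; auto] | auto].
Qed.

Lemma iso_comp O P Q f g : iso O P f -> iso P Q g -> iso O Q (fun x => g (f x)).
Proof.
  intros [[Hf1 Hf2] [f' [[Hf'1 Hf'2] [Hf3 Hf4]]]] [[Hg1 Hg2] [g' [[Hg'1 Hg'2] [Hg3 Hg4]]]].
  assert (Hf : forall x, inX O x -> inX P (f x))
    by (intros; apply (morphism_inX (conj Hf1 Hf2)); auto).
  assert (Hg' : forall y, inX Q y -> inX P (g' y))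
    by (intros; apply (morphism_inX (conj Hg'1 Hg'2)); auto).
  split; [split|exists (fun y => f' (g' y)); split; [split|split]]; intros.
  - rewrite Hg1; auto.
  - auto.
  - rewrite Hf'1; auto.
  - auto.
  - rewrite Hg3; auto.
  - rewrite Hf4; auto.
Qed.

Lemma iso_id O : iso O O (fun x => x).
Proof. split; [split; auto | exists (fun x => x); split; [split|]; auto]. Qed.

Lemma pmarking_in O c : pmarking O c -> marking_in O c.
Proof.
  intros [_ [_ H]] K s H1 x b H2. destruct (H K s H1) as [Hcar _].
  specialize (Hcar _ H2). unfold carrier in Hcar; simpl in Hcar.
  unfold inX; rewrite Hcar; discriminate.
Qed.

Lemma pmarking_iso Q P f c : is_poset P -> iso Q P f -> pmarking Q c -> pmarking P (mimg f c).
Proof.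
  intros HP Hiso Hpm. pose proof (pmarking_in Hpm) as Hin.
  destruct Hpm as [HQ [[L HL] Hc]].
  destruct (iso_inverse Hiso) as [g [[[Hg1 Hg2] _] [Hgf Hfg]]].
  destruct Hiso as [[Hf1 _] _].
  split; [auto|split].
  - exists (map (fun p => (img f (fst p), snd p)) L).
    intros [K' s] [K [H1 HK']]. simpl in HK'; subst K'.
    apply (in_map (fun p => (img f (fst p), snd p)) L (K, s)), (HL (K, s)); auto.
  - intros K' s [K [H1 ->]]. destruct (Hc K s H1) as [Hcar Hdc]. split.
    + intros [u b] [x [Hx Hu]]. simpl in Hu; subst u. unfold carrier in *; simpl.
      rewrite Hf1; [apply (Hcar _ Hx) | eapply Hin; eauto].
    + intros y b x a [y0 [Hy0 Hy]] Hle Hlab. simpl in *. subst y.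
      assert (Hx : inX P x) by (unfold inX; rewrite Hlab; discriminate).
      exists (g x). split; [|simpl; symmetry; auto].
      apply (Hdc y0 b); auto.
      * rewrite <- (Hgf y0); [auto | eapply Hin; eauto].
      * rewrite Hg1; auto.
Qed.

Lemma pmarking_iso_back Q P f c : is_poset Q -> iso Q P f -> marking_in Q c ->
  pmarking P (mimg f c) -> pmarking Q c.
Proof.
  intros HQ Hiso Hin Hpm. destruct (iso_inverse Hiso) as [g [Hg [Hgf _]]].
  rewrite <- (mimg_cancel Hin Hgf). apply (pmarking_iso HQ Hg Hpm).
Qed.

Definition ext_fresh (e e' : E) f : E -> E :=
  fun x => if excluded_middle_informative (x = e) then e' else f x.

Lemma ext_fresh_new e e' f : ext_fresh e e' f e = e'.
Proof. unfold ext_fresh. destruct (excluded_middle_informative (e = e)); congruence. Qed.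

Lemma ext_fresh_old e e' f x : x <> e -> ext_fresh e e' f x = f x.
Proof. unfold ext_fresh. destruct (excluded_middle_informative (x = e)); congruence. Qed.

Lemma ext_fresh_in O e e' f x : ~ inX O e -> inX O x -> ext_fresh e e' f x = f x.
Proof. intros He Hx. apply ext_fresh_old. intros ->. contradiction. Qed.

Lemma ext_fresh_cancel {Q P f g e e' x} : morphism Q P f -> ~ inX P e' ->
  (forall y, inX Q y -> g (f y) = y) -> x = e \/ inX Q x ->
  ext_fresh e' e g (ext_fresh e e' f x) = x.
Proof.
  intros Hf He' Hgf Hx. unfold ext_fresh at 2.
  destruct (excluded_middle_informative (x = e)) as [->|Hxe].
  - apply ext_fresh_new.
  - destruct Hx as [Hx|Hx]; [contradiction|].
    rewrite (ext_fresh_in _ _ He'); auto. apply (morphism_inX Hf Hx).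
Qed.

Lemma plab_delta O K e a x :
  plab (delta O K e a) x = if excluded_middle_informative (x = e) then Some a else plab O x.
Proof. reflexivity. Qed.

Lemma inX_delta O K e a x : inX (delta O K e a) x <-> x = e \/ inX O x.
Proof.
  unfold inX. rewrite plab_delta.
  destruct (excluded_middle_informative (x = e)); split; try tauto; discriminate.
Qed.

Lemma ple_delta O K e a x y : ple (delta O K e a) x y <->
  inX (delta O K e a) x /\ inX (delta O K e a) y /\
  clos_refl_trans E (fun x y => ple O x y \/ (y = e /\ exists b, K (x, b))) x y.
Proof. reflexivity. Qed.

(* Since [e] is fresh, it is maximal: a chain through [e] must end there. *)
Lemma delta_closure O K e x y : is_poset O -> ~ inX O e -> cset_in O K ->
  clos_refl_trans E (fun x y => ple O x y \/ (y = e /\ exists b, K (x, b))) x y ->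
  x = y \/ ple O x y \/ (y = e /\ exists z b, K (z, b) /\ ple O x z).
Proof.
  intros HO He HK H. pose proof HO as [_ [_ [Hrefl [_ Htrans]]]].
  induction H as [x y [H|[-> [b H]]] | x | x y w _ IH1 _ IH2]; auto.
  - right; right. split; auto. exists x, b. split; auto. apply Hrefl. eapply HK; eauto.
  - destruct IH1 as [<-|[H1|[-> [z [b [Hz Hxz]]]]]]; auto.
    + destruct IH2 as [<-|[H2|[-> [z [b [Hz Hyz]]]]]]; auto.
      * right; left. eauto.
      * right; right. split; auto. exists z, b. eauto.
    + destruct IH2 as [<-|[H2|[-> _]]].
      * right; right. eauto 6.
      * destruct He. apply (ple_inX HO H2).
      * right; right. eauto 6.
Qed.

Lemma delta_poset O K e a : is_poset O -> ~ inX O e -> cset_in O K -> is_poset (delta O K e a).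
Proof.
  intros HO He HK. pose proof HO as [[L HL] [_ [_ [Hanti _]]]].
  split; [|split; [|split; [|split]]].
  - exists (e :: L). intros x Hx. apply inX_delta in Hx.
    destruct Hx as [->|Hx]; simpl; auto.
  - intros x y H. apply ple_delta in H. split; apply H.
  - intros x Hx. apply ple_delta. repeat split; auto. apply rt_refl.
  - intros x y [_ [_ H1]]%ple_delta [_ [_ H2]]%ple_delta.
    apply delta_closure in H1; auto. apply delta_closure in H2; auto.
    assert (Hnot : forall z, ple O z e \/ ple O e z -> False)
      by (intros z [Hz|Hz]; apply He; apply (ple_inX HO Hz)).
    destruct H1 as [H1|[H1|[H1 _]]]; auto;
    destruct H2 as [H2|[H2|[H2 _]]]; subst; auto; exfalso; eauto.
  - intros x y w [Hx [_ H1]]%ple_delta [_ [Hw H2]]%ple_delta.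
    apply ple_delta. repeat split; auto. eapply rt_trans; eauto.
Qed.

Lemma delta_morphism O1 O2 h K1 K2 e1 e2 a : is_poset O1 -> morphism O1 O2 h ->
  ~ inX O1 e1 -> ~ inX O2 e2 -> (forall z b, K1 (z, b) -> inX O1 z /\ K2 (h z, b)) ->
  morphism (delta O1 K1 e1 a) (delta O2 K2 e2 a) (ext_fresh e1 e2 h).
Proof.
  intros HO1 Hh He1 He2 HK. pose proof Hh as [Hh1 Hh2].
  assert (Hlab : forall x, inX (delta O1 K1 e1 a) x ->
    plab (delta O2 K2 e2 a) (ext_fresh e1 e2 h x) = plab (delta O1 K1 e1 a) x).
  { intros x [->|Hx]%inX_delta.
    - rewrite ext_fresh_new, !plab_delta.
      do 2 (destruct excluded_middle_informative; try congruence).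
    - rewrite (ext_fresh_in _ _ He1 Hx), !plab_delta.
      destruct (excluded_middle_informative (h x = e2)) as [Hhx|];
        [destruct He2; rewrite <- Hhx; apply (morphism_inX Hh Hx)|].
      destruct (excluded_middle_informative (x = e1)); [subst; contradiction | auto]. }
  assert (HinX : forall x, inX (delta O1 K1 e1 a) x ->
    inX (delta O2 K2 e2 a) (ext_fresh e1 e2 h x))
    by (intros x Hx; unfold inX; rewrite Hlab; auto).
  split; [exact Hlab|].
  intros x y [Hx [Hy H]]%ple_delta. apply ple_delta. repeat split; auto. clear Hx Hy.
  induction H as [x y [H|[-> [b H]]] | x | x y w _ IH1 _ IH2].
  - destruct (ple_inX HO1 H) as [Hx Hy]. apply rt_step; left.
    rewrite !(ext_fresh_in _ _ He1); auto.
  - destruct (HK _ _ H) as [Hx Hk]. apply rt_step; right.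
    rewrite ext_fresh_new, (ext_fresh_in _ _ He1 Hx). eauto.
  - apply rt_refl.
  - eapply rt_trans; eauto.
Qed.

Lemma delta_iso Q P f K e e' a : is_poset Q -> is_poset P -> iso Q P f ->
  ~ inX Q e -> ~ inX P e' -> cset_in Q K ->
  iso (delta Q K e a) (delta P (img f K) e' a) (ext_fresh e e' f).
Proof.
  intros HQ HP Hiso He He' HK.
  destruct (iso_inverse Hiso) as [g [Hg [Hgf Hfg]]].
  split; [|exists (ext_fresh e' e g); split; [|split]].
  - apply delta_morphism; auto; [apply Hiso|].
    intros z b Hz. split; [eapply HK; eauto | exists z; auto].
  - apply delta_morphism; auto; [apply Hg|].
    intros z b [x [Hx Hz]]. simpl in Hz; subst z.
    split; [apply (morphism_inX (proj1 Hiso)); eapply HK; eauto | rewrite Hgf; eauto].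
  - intros x Hx%inX_delta. eapply ext_fresh_cancel; eauto. apply Hiso.
  - intros y Hy%inX_delta. eapply ext_fresh_cancel; eauto. apply Hg.
Qed.

Lemma maxO_img Q P f M : iso Q P f -> cset_in Q M -> img f (maxO Q M) = maxO P (img f M).
Proof.
  intros Hiso HM. destruct (iso_inverse Hiso) as [g [[[_ Hg2] _] [Hgf _]]].
  destruct Hiso as [[_ Hf2] _].
  apply cset_ext; intros [u b]; unfold maxO, img; simpl; split.
  - intros [x [[Hx Hmax] ->]]. split; [eauto|].
    intros [v b'] [y [Hy Hv]] Hle. simpl in *. subst v.
    assert (y = x) as -> by (apply (Hmax (y, b')); simpl; auto;
      rewrite <- (Hgf x), <- (Hgf y); eauto).
    reflexivity.
  - intros [[x [Hx ->]] Hmax]. exists x. repeat split; auto.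
    intros [y b'] Hy Hle. simpl in *.
    assert (f y = f x) by (apply (Hmax (f y, b')); [exists y | simpl]; auto).
    rewrite <- (Hgf x), <- (Hgf y); eauto. congruence.
Qed.

End Posets.

Section Concrete.
Variables (E Act S T : Type).
Variables (pre : S -> T -> Prop) (post : T -> S -> Prop) (lab : T -> Act).
Implicit Types (c d : marking E Act S) (K : cset E Act) (O P Q X Y : poset E Act) (f g : E -> E).

Notation cstep := (cstep pre post lab).
Notation csim := (csim pre post lab).

Lemma cstep_inv O c K e a O' c' : cstep O c K e a O' c' ->
  pmarking O c /\ ~ inX O e /\ cset_in O K /\ O' = delta O K e a /\ marking_in O' c'.
Proof.
  intros [t [cp [cr [-> [Hpm [_ [_ [He [-> [-> ->]]]]]]]]]].
  pose proof (pmarking_in Hpm) as Hin.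
  assert (Hcp : cset_in O (causes cp))
    by (intros x b [K [s [H1 H2]]]; eapply Hin; [left|]; eauto).
  split; [exact Hpm | split; [exact He | split; [|split; [reflexivity|]]]].
  - intros x b [Hx _]. eauto.
  - intros K s [[-> _]|H] x b Hx; apply inX_delta.
    + destruct Hx as [Hx|Hx]; [right; eauto | left; congruence].
    + right. eapply Hin; [right|]; eauto.
Qed.

Lemma new_causes_img O f c e e' a : marking_in O c -> ~ inX O e ->
  img (ext_fresh e e' f) (fun p => causes c p \/ p = (e, a)) =
  (fun p => causes (mimg f c) p \/ p = (e', a)).
Proof.
  intros Hin He. pose proof (marking_in_causes Hin) as HK.
  rewrite causes_mimg. apply cset_ext; intros [u b]; unfold img; simpl; split.
  - intros [x [[Hx|Hx] ->]].
    + left. exists x. split; auto. apply (ext_fresh_in _ _ He). eapply HK; eauto.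
    + injection Hx as -> ->. right. rewrite ext_fresh_new; auto.
  - intros [[x [Hx ->]]|Hx].
    + exists x. split; auto. symmetry. apply (ext_fresh_in _ _ He). eapply HK; eauto.
    + injection Hx as -> ->. exists e. rewrite ext_fresh_new; auto.
Qed.

Lemma cstep_iso Q P f c K e a Q' c' e' : is_poset P -> iso Q P f -> ~ inX P e' ->
  cstep Q c K e a Q' c' ->
  cstep P (mimg f c) (img f K) e' a (delta P (img f K) e' a)
    (mimg (ext_fresh e e' f) c') /\
  iso Q' (delta P (img f K) e' a) (ext_fresh e e' f).
Proof.
  intros HP Hiso He' Hst.
  destruct (cstep_inv Hst) as [Hpm [He [HK [-> _]]]].
  split; [|apply delta_iso; auto; apply Hpm].
  destruct Hst as [t [cp [cr [-> [_ [Hpl [Ha [_ [-> [_ ->]]]]]]]]]].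
  pose proof (pmarking_in Hpm) as Hin.
  assert (Hcp : marking_in Q cp) by (intros K s H; eapply Hin; left; eauto).
  assert (Hcr : marking_in Q cr) by (intros K s H; eapply Hin; right; eauto).
  exists t, (mimg f cp), (mimg f cr).
  split; [apply mimg_mcup|split; [exact (pmarking_iso HP Hiso Hpm)|]].
  split; [intro s; rewrite places_mimg; apply Hpl|].
  do 2 (split; [auto|]). split; [|split; [reflexivity|]].
  - rewrite causes_mimg. apply maxO_img; auto. apply marking_in_causes, Hcp.
  - rewrite mimg_mcup, (mimg_ext _ f cr); [f_equal|].
    + apply marking_ext; intros K s; unfold mimg; split.
      * intros [K0 [[-> Hs] ->]]. split; auto. apply (new_causes_img _ _ _ Hcp He).
      * intros [-> Hs]. eexists. split; [split; [reflexivity | exact Hs] |].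
        symmetry. apply (new_causes_img _ _ _ Hcp He).
    + intros K s x b H1 H2. apply (ext_fresh_in _ _ He). eapply Hcr; eauto.
Qed.

Lemma csim_pmarking X c1 c2 : csim X c1 c2 -> pmarking X c1 /\ pmarking X c2.
Proof. intros [R [HR H]]. destruct (HR _ _ _ _ _ H) as [_ [_ [H1 [H2 _]]]]. auto. Qed.

Lemma csim_step X c1 c2 K e a X' c1' : csim X c1 c2 -> cstep X c1 K e a X' c1' ->
  exists c2', cstep X c2 K e a X' c2' /\ csim X' c1' c2'.
Proof.
  intros [R [HR H]] Hst. destruct (HR _ _ _ _ _ H) as [_ [_ [_ [_ [Hfw _]]]]].
  destruct (Hfw _ _ _ _ _ Hst) as [c2' [Hst2 HR2]]. exists c2'. split; [|exists R]; auto.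
Qed.

Lemma csim_sym X c1 c2 : csim X c1 c2 -> csim X c2 c1.
Proof.
  intros [R [HR H]]. exists (fun X p q => R X q p). split; auto.
  intros X' O1 d1 O2 d2 H1. destruct (HR _ _ _ _ _ H1) as [-> [-> [H2 [H3 [H4 H5]]]]].
  split; [|split; [|split; [|split; [|split]]]]; auto.
Qed.

Lemma csim_coind (R : poset E Act -> marking E Act S -> marking E Act S -> Prop) :
  (forall X c1 c2, R X c1 c2 -> R X c2 c1) ->
  (forall X c1 c2, R X c1 c2 -> pmarking X c1) ->
  (forall X c1 c2 K e a X' c1', R X c1 c2 -> cstep X c1 K e a X' c1' ->
     exists c2', cstep X c2 K e a X' c2' /\ R X' c1' c2') ->
  forall X c1 c2, R X c1 c2 -> csim X c1 c2.
Proof.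
  intros Hsym Hpm Hfw X c1 c2 H.
  exists (fun X p q => fst p = X /\ fst q = X /\ R X (snd p) (snd q)). split; [|auto].
  intros X' O1 d1 O2 d2 [H1 [H2 HR]]; simpl in *; subst.
  split; [auto|split; [auto|split; [eauto|split; [eauto|split]]]].
  - intros K e a X'' d1' Hst. destruct (Hfw _ _ _ _ _ _ _ _ HR Hst) as [d2' [Hst2 HR2]].
    exists d2'; auto.
  - intros K e a X'' d2' Hst.
    destruct (Hfw _ _ _ _ _ _ _ _ (Hsym _ _ _ HR) Hst) as [d1' [Hst2 HR2]].
    exists d1'; auto.
Qed.

Hypothesis HEinf : forall L : list E, exists e : E, ~ In e L.

Lemma exists_fresh O : is_poset O -> exists e, ~ inX O e.
Proof. intros [[L HL] _]. destruct (HEinf L) as [e He]. exists e. intro H; apply He; auto. Qed.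

Definition csim_up_to_iso X d1 d2 : Prop :=
  is_poset X /\ exists Y h b1 b2, is_poset Y /\ iso Y X h /\ csim Y b1 b2 /\
    d1 = mimg h b1 /\ d2 = mimg h b2.

Lemma csim_up_to_iso_step X d1 d2 K e a X' d1' : csim_up_to_iso X d1 d2 ->
  cstep X d1 K e a X' d1' ->
  exists d2', cstep X d2 K e a X' d2' /\ csim_up_to_iso X' d1' d2'.
Proof.
  intros [HX [Y [h [b1 [b2 [HY [Hiso [Hcs [-> ->]]]]]]]]] Hst.
  destruct (iso_inverse Hiso) as [g [Hg [Hgh Hhg]]].
  destruct (cstep_inv Hst) as [_ [He [HK [-> Hin']]]].
  destruct (exists_fresh HY) as [e' He'].
  destruct (csim_pmarking Hcs) as [Hpm1 _].
  destruct (cstep_iso HY Hg He' Hst) as [Hst1 _].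
  rewrite (mimg_cancel (pmarking_in Hpm1) Hgh) in Hst1.
  destruct (csim_step Hcs Hst1) as [c2' [Hst2 Hcs']].
  destruct (cstep_iso HX Hiso He Hst2) as [Hst3 Hiso3].
  rewrite (img_cancel HK Hhg) in Hst3, Hiso3.
  eexists; split; [exact Hst3|]. split; [apply delta_poset; auto|].
  exists (delta Y (img g K) e' a), (ext_fresh e' e h), (mimg (ext_fresh e e' g) d1'), c2'.
  split; [apply (csim_pmarking Hcs')|].
  split; [exact Hiso3|split; [exact Hcs'|split; [|reflexivity]]].
  symmetry. apply (mimg_cancel Hin'). intros x Hx%inX_delta.
  apply (ext_fresh_cancel (proj1 Hg) He' Hhg Hx).
Qed.

Lemma csim_iso Y X h b1 b2 : is_poset Y -> is_poset X -> iso Y X h ->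
  csim Y b1 b2 -> csim X (mimg h b1) (mimg h b2).
Proof.
  intros HY HX Hiso Hcs. apply (csim_coind csim_up_to_iso).
  - intros X' d1 d2 [HX' [Y' [h' [c1 [c2 [HY' [Hh [Hc [-> ->]]]]]]]]].
    split; [auto|exists Y', h', c2, c1; auto using csim_sym].
  - intros X' d1 d2 [HX' [Y' [h' [c1 [c2 [HY' [Hh [Hc [-> ->]]]]]]]]].
    apply (pmarking_iso HX' Hh), (csim_pmarking Hc).
  - exact csim_up_to_iso_step.
  - split; [auto|exists Y, h, b1, b2; auto].
Qed.

End Concrete.

Section Abstract.
Variables (E Act S T : Type).
Variables (pre : S -> T -> Prop) (post : T -> S -> Prop) (lab : T -> Act).
Variables (canon : poset E Act -> poset E Act) (alpha : poset E Act -> E -> E)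
  (fr : poset E Act -> cset E Act -> Act -> E).
Implicit Types (c d : marking E Act S) (K : cset E Act) (O P Q X Y : poset E Act) (f g : E -> E).

Notation cstep := (cstep pre post lab).
Notation csim := (csim pre post lab).
Notation astep := (astep pre post lab canon alpha fr).
Notation asim := (asim pre post lab canon alpha fr).

Lemma asim_abs_pmarking O d1 d2 : asim O d1 d2 ->
  abs_pmarking canon O d1 /\ abs_pmarking canon O d2.
Proof. intros [R [HR H]]. destruct (HR _ _ _ _ _ H) as [_ [_ [H1 [H2 _]]]]. auto. Qed.

Lemma asim_step O d1 d2 K a O' d1' : asim O d1 d2 -> astep O d1 K a O' d1' ->
  exists d2', astep O d2 K a O' d2' /\ asim O' d1' d2'.
Proof.
  intros [R [HR H]] Hst. destruct (HR _ _ _ _ _ H) as [_ [_ [_ [_ [Hfw _]]]]].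
  destruct (Hfw _ _ _ _ Hst) as [d2' [Hst2 HR2]]. exists d2'. split; [|exists R]; auto.
Qed.

Lemma asim_sym O d1 d2 : asim O d1 d2 -> asim O d2 d1.
Proof.
  intros [R [HR H]]. exists (fun X p q => R X q p). split; auto.
  intros X O1 e1 O2 e2 H1. destruct (HR _ _ _ _ _ H1) as [-> [-> [H2 [H3 [H4 H5]]]]].
  split; [|split; [|split; [|split; [|split]]]]; auto.
Qed.

Lemma asim_coind (R : poset E Act -> marking E Act S -> marking E Act S -> Prop) :
  (forall O d1 d2, R O d1 d2 -> R O d2 d1) ->
  (forall O d1 d2, R O d1 d2 -> abs_pmarking canon O d1) ->
  (forall O d1 d2 K a O' d1', R O d1 d2 -> astep O d1 K a O' d1' ->
     exists d2', astep O d2 K a O' d2' /\ R O' d1' d2') ->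
  forall O d1 d2, R O d1 d2 -> asim O d1 d2.
Proof.
  intros Hsym Hpm Hfw O d1 d2 H.
  exists (fun O p q => fst p = O /\ fst q = O /\ R O (snd p) (snd q)). split; [|auto].
  intros O' O1 e1 O2 e2 [H1 [H2 HR]]; simpl in *; subst.
  split; [auto|split; [auto|split; [eauto|split; [eauto|split]]]].
  - intros K a O'' e1' Hst. destruct (Hfw _ _ _ _ _ _ _ HR Hst) as [e2' [Hst2 HR2]].
    exists e2'; auto.
  - intros K a O'' e2' Hst.
    destruct (Hfw _ _ _ _ _ _ _ (Hsym _ _ _ HR) Hst) as [e1' [Hst2 HR2]].
    exists e1'; auto.
Qed.

Lemma comp_ext_fresh (F : E -> E) e e' f :
  (fun x => if excluded_middle_informative (x = e) then F e' else F (f x)) =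
  (fun x => F (ext_fresh e e' f x)).
Proof.
  apply functional_extensionality; intro x. unfold ext_fresh.
  destruct (excluded_middle_informative (x = e)); reflexivity.
Qed.

Hypothesis Hcanon : forall O, is_poset O -> is_poset (canon O) /\ iso O (canon O) (alpha O).
Hypothesis Hclass : forall O O', is_poset O -> is_poset O' -> isomorphic O O' ->
  canon O = canon O'.
Hypothesis Hfr : forall O K a, is_poset O -> ~ inX O (fr O K a).
Hypothesis HEinf : forall L : list E, exists e : E, ~ In e L.

Lemma canon_abstract X : is_poset X -> abstract canon (canon X).
Proof.
  intro HX. destruct (Hcanon HX) as [HcX HaX]. unfold abstract.
  symmetry. apply Hclass; auto. exists (alpha X); auto.
Qed.

Lemma astep_fresh O d K a O' d' : astep O d K a O' d' ->
  O' = dabs canon fr O K a /\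
  exists c', cstep O d K (fr O K a) a (delta O K (fr O K a) a) c' /\
    d' = mimg (oldf alpha fr O K a) c'.
Proof.
  intros [Q [c [K1 [e [Q' [c' [Hst [-> [-> [-> [-> ->]]]]]]]]]]].
  destruct (cstep_inv Hst) as [[HQ _] _].
  destruct (Hcanon HQ) as [HcQ HaQ].
  destruct (cstep_iso HcQ HaQ (@Hfr (canon Q) (img (alpha Q) K1) a HcQ) Hst) as [Hst' _].
  split; [reflexivity|]. eexists. split; [exact Hst'|].
  rewrite mimg_comp. unfold newev. rewrite comp_ext_fresh. reflexivity.
Qed.

Lemma astep_of_fresh O d K a c' : is_poset O -> abstract canon O ->
  cstep O d K (fr O K a) a (delta O K (fr O K a) a) c' ->
  astep O d K a (dabs canon fr O K a) (mimg (oldf alpha fr O K a) c').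
Proof.
  intros HO Hab Hst. set (e0 := fr O K a) in Hst.
  destruct (Hcanon HO) as [_ HaO]. rewrite Hab in HaO.
  destruct (iso_inverse HaO) as [g [Hg [_ Hag]]].
  destruct (cstep_inv Hst) as [Hpm [He0 [HK [_ Hin']]]].
  destruct (cstep_iso HO Hg He0 Hst) as [Hst' _].
  exists O, (mimg g d), (img g K), e0, (delta O (img g K) e0 a), (mimg (ext_fresh e0 e0 g) c').
  split; [exact Hst'|split; [symmetry; exact Hab|]].
  split; [symmetry; apply (mimg_cancel (pmarking_in Hpm) Hag)|].
  split; [symmetry; apply (img_cancel HK Hag)|].
  split; [reflexivity|].
  unfold newev. rewrite comp_ext_fresh, mimg_comp. apply mimg_ext.
  intros K' s x b H1 H2. f_equal. symmetry.
  apply (ext_fresh_cancel (proj1 Hg) He0 Hag).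
  apply (proj1 (inX_delta O K e0 a x)), (Hin' _ _ H1 _ _ H2).
Qed.

Lemma csim_asim O d1 d2 : abstract canon O -> csim O d1 d2 -> asim O d1 d2.
Proof.
  intros Hab Hcs.
  apply (asim_coind (fun O d1 d2 => abstract canon O /\ csim O d1 d2)); [| | |auto].
  - intros X e1 e2 [HX Hc]. auto using csim_sym.
  - intros X e1 e2 [HX Hc]. split; [apply (csim_pmarking Hc) | auto].
  - intros X e1 e2 K a X' e1' [HX Hc] Hst.
    destruct (astep_fresh Hst) as [-> [c1' [Hst1 ->]]].
    destruct (csim_step Hc Hst1) as [c2' [Hst2 Hc']].
    destruct (csim_pmarking Hc) as [[HXp _] _].
    destruct (csim_pmarking Hc') as [[HXd _] _].
    exists (mimg (oldf alpha fr X K a) c2').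
    split; [apply astep_of_fresh; auto|].
    split; [apply canon_abstract; auto|].
    destruct (Hcanon HXd) as [HcXd HaXd]. exact (csim_iso HEinf HXd HcXd HaXd Hc').
Qed.

Definition asim_up_to_iso X c1 c2 : Prop :=
  is_poset X /\ marking_in X c1 /\ marking_in X c2 /\
  exists f, iso X (canon X) f /\ asim (canon X) (mimg f c1) (mimg f c2).

Lemma asim_up_to_iso_step X c1 c2 K e a X' c1' : asim_up_to_iso X c1 c2 ->
  cstep X c1 K e a X' c1' ->
  exists c2', cstep X c2 K e a X' c2' /\ asim_up_to_iso X' c1' c2'.
Proof.
  intros [HX [Hin1 [Hin2 [f [Hf Has]]]]] Hst.
  destruct (cstep_inv Hst) as [_ [He [HK [-> Hin1']]]].
  destruct (Hcanon HX) as [HcX _].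
  set (K0 := img f K). set (e0 := fr (canon X) K0 a).
  destruct (cstep_iso HcX Hf (@Hfr _ K0 a HcX) Hst) as [Hst1 Hiso1].
  fold K0 e0 in Hst1, Hiso1.
  destruct (asim_step Has (astep_of_fresh HcX (canon_abstract HX) Hst1)) as [d2' [Hast2 Has']].
  destruct (astep_fresh Hast2) as [_ [c2'' [Hst2 ->]]].
  destruct (cstep_inv Hst2) as [_ [_ [HK0 [_ Hin2'']]]].
  destruct (iso_inverse Hf) as [fi [Hfi [Hfif Hffi]]].
  destruct (cstep_iso HX Hfi He Hst2) as [Hst3 _].
  unfold K0 in Hst3. rewrite (mimg_cancel Hin2 Hfif), (img_cancel HK Hfif) in Hst3.
  eexists. split; [exact Hst3|].
  assert (HXd : is_poset (delta (canon X) K0 e0 a))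
    by (apply delta_poset; [exact HcX | apply Hfr, HcX | exact HK0]).
  destruct (Hcanon HXd) as [_ HaXd].
  assert (HX' : is_poset (delta X K e a)) by (apply delta_poset; assumption).
  split; [exact HX'|split; [exact Hin1'|split; [apply (cstep_inv Hst3)|]]].
  exists (fun x => alpha (delta (canon X) K0 e0 a) (ext_fresh e e0 f x)).
  assert (Hc : canon (delta X K e a) = canon (delta (canon X) K0 e0 a))
    by (apply Hclass; [exact HX' | exact HXd | exists (ext_fresh e e0 f); exact Hiso1]).
  rewrite Hc. split; [exact (iso_comp Hiso1 HaXd)|].
  rewrite <- !(mimg_comp (ext_fresh e e0 f) (alpha _)), (mimg_cancel Hin2''); [exact Has'|].
  intros x Hx%inX_delta. apply (ext_fresh_cancel (proj1 Hfi) He Hffi Hx).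
Qed.

Lemma asim_csim O c1 c2 : abs_pmarking canon O c1 -> abs_pmarking canon O c2 ->
  asim O c1 c2 -> csim O c1 c2.
Proof.
  intros [Hpm1 Hab] [Hpm2 _] Has.
  apply (csim_coind asim_up_to_iso).
  - intros X d1 d2 [HX [Hin1 [Hin2 [f [Hf Ha]]]]].
    split; [|split; [|split; [|exists f; split; [|apply asim_sym]]]]; auto.
  - intros X d1 d2 [HX [Hin1 [_ [f [Hf Ha]]]]].
    apply (pmarking_iso_back HX Hf Hin1), (asim_abs_pmarking Ha).
  - exact asim_up_to_iso_step.
  - split; [apply Hpm1|split; [apply (pmarking_in Hpm1)|split; [apply (pmarking_in Hpm2)|]]].
    exists (fun x => x). rewrite !mimg_id. unfold abstract in Hab. rewrite Hab.
    split; [apply iso_id | exact Has].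
Qed.

End Abstract.

Theorem lemma7
  (E Act S T : Type)
  (* the set of event names is infinite *)
  (HEinf : forall L : list E, exists e : E, ~ In e L)
  (* the net N = (S, T, F, l) *)
  (pre : S -> T -> Prop) (post : T -> S -> Prop) (lab : T -> Act)
  (Hpre : forall t, (exists s, pre s t) /\ finite_pred (fun s => pre s t))
  (Hpost : forall t, (exists s, post t s) /\ finite_pred (fun s => post t s))
  (* canonical representatives of isomorphism classes and alpha_O : O -> [O] *)
  (canon : poset E Act -> poset E Act) (alpha : poset E Act -> E -> E)
  (Hcanon : forall O, is_poset O -> is_poset (canon O) /\ iso O (canon O) (alpha O))
  (Hclass : forall O O', is_poset O -> is_poset O' -> isomorphic O O' ->
                         canon O = canon O')
  (* choice of the fresh event used in delta(O,K,a) *)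
  (fr : poset E Act -> cset E Act -> Act -> E)
  (Hfr : forall O K a, is_poset O -> ~ inX O (fr O K a))
  (O : poset E Act) (c1 c2 : marking E Act S) :
  abs_pmarking canon O c1 -> abs_pmarking canon O c2 ->
  (csim pre post lab O c1 c2 <-> asim pre post lab canon alpha fr O c1 c2).
Proof.
  intros H1 H2. split.
  - apply (csim_asim alpha fr Hcanon Hclass Hfr HEinf), H1.
  - apply (asim_csim Hcanon Hclass Hfr H1 H2).
Qed.
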